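(* With $\mathcal{E}=\mathcal{E}nd_\Gamma(\mathcal{P})$, $\delta$, $\sigma$ and ${}^{\sigma}\mathcal{E}$ as in the context: (1) if $x\in{}^{\sigma}\mathcal{E}$ is homogeneous, then $\sigma\circ\delta(x)=(-1)^{|\sigma|(|x|+1)}\delta(x)\circ\sigma$; (2) ${}^{\sigma}\mathcal{E}$ is a DG-subalgebra of $\mathcal{E}$.
   Context: $k$ is a field, $\Gamma$ a $k$-algebra (right modules), $M$ a $\Gamma$-module, $n\ge1$. We are given a complex of finitely generated projective $\Gamma$-modules $\mathrm{P}=(0\to P_{n-1}\xrightarrow{d_{n-1}}\cdots\xrightarrow{d_1}P_0\to 0)$, $P_i$ in degree $-i$, and maps $\alpha\colon P_0\to M$, $\beta\colon M\to P_{n-1}$ with $0\to M\xrightarrow{\beta}P_{n-1}\to\cdots\to P_0\xrightarrow{\alpha}M\to 0$ exact; $d_0=\beta\circ\alpha$. $\mathcal{P}$ is the complex whose component in degree $-(\ell n+i)$ ($\ell\ge0$, $0\le i\le n-1$) is a copy of $P_i$ (the $\ell$-th copy), with differential $(-1)^{\ell n}d_i$ from the $\ell$-th copy of $P_i$ to the $\ell$-th copy of $P_{i-1}$ ($i\ge1$) and $(-1)^{\ell n}d_0$ from the $(\ell+1)$-th copy of $P_0$ to the $\ell$-th copy of $P_{n-1}$. $\mathcal{E}=\mathcal{E}nd_\Gamma(\mathcal{P})$ is the DG endomorphism algebra (degree $i$ part: all collections of maps $\mathcal{P}^j\to\mathcal{P}^{j+i}$; product composition; differential $\delta(f)=d_{\mathcal{P}}\circ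 f-(-1)^{|f|}f\circ d_{\mathcal{P}}$). $\sigma\in\mathcal{E}^n$ is the identity from the $\ell$-th copy of $P_i$ to the $(\ell-1)$-th copy for $\ell\ge1$ and zero on the $0$-th copy; $|\sigma|=n$. ${}^{\sigma}\mathcal{E}=\bigoplus_i{}^{\sigma}\mathcal{E}^i$ with ${}^{\sigma}\mathcal{E}^i=\{x\in\mathcal{E}^i:\sigma\circ x=(-1)^{|\sigma||x|}x\circ\sigma\}$. *)

From HB Require Import structures.
From mathcomp Require Import all_boot all_order all_algebra.
Set Implicit Arguments. Unset Strict Implicit. Unset Printing Implicit Defensive.
Import GRing.Theory.
Local Open Scope ring_scope.

(* Right R-modules are modelled as left modules over the converse ring R^c. *)

Section ModuleNotions.
Variable R : nzRingType.

Definition fin_gen (V : lmodType R) : Prop :=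
  exists m (g : 'I_m -> V), forall v : V,
    exists c : 'I_m -> R, v = \sum_(i < m) c i *: g i.

Definition projective (V : lmodType R) : Prop :=
  forall (A B : lmodType R) (p : {linear A -> B}) (f : {linear V -> B}),
    (forall b, exists a, p a = b) ->
    exists g : {linear V -> A}, forall v, p (g v) = f v.
End ModuleNotions.

Section PeriodicComplex.
Variables (k : fieldType) (G : algType k).
Local Notation Gc := (G^c).
Variables (M : lmodType Gc) (n : nat) (P : nat -> lmodType Gc).
(* d i : P_{i+1} -> P_i   (the paper's d_{i+1}), meaningful for i+2 <= n *)
Variables (d : forall i, {linear P i.+1 -> P i})
          (alpha : {linear P 0 -> M}) (beta : {linear M -> P n.-1}).

Definition tr (i j : nat) (v : P i) : P j :=
  match i =P j with
  | ReflectT e => eq_rect i P v j e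
  | ReflectF _ => 0
  end.

Definition ker_out (j : nat) : P j -> Prop :=
  match j as r return P r -> Prop with
  | 0 => fun v => alpha v = 0
  | i.+1 => fun v => d i v = 0
  end.

Definition im_in (j : nat) (v : P j) : Prop :=
  if (j < n.-1)%N then exists w : P j.+1, d j w = v
  else exists x : M, @tr n.-1 j (beta x) = v.

(** 0 -> M -> P_{n-1} -> ... -> P_0 -> M -> 0 is exact *)
Definition exact_seq : Prop :=
  [/\ (forall x : M, beta x = 0 -> x = 0),
      (forall j, (j < n)%N -> forall v : P j, ker_out v <-> im_in v)
    & (forall x : M, exists v : P 0, alpha v = x)].

(** The complex 𝒫: its component in cohomological degree -h (h : nat)
    is P (h %% n)%N (the (h %/ n)-th copy of P_{h %% n}).  A (possibly
    non-homogeneous) collection of maps between components is a "matrix"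
    of maps F h h' : 𝒫^{-h} -> 𝒫^{-h'}. *)
Definition C (h : nat) := P (h %% n)%N.
Definition mat := forall h h' : nat, C h -> C h'.

(** F has degree a: it maps 𝒫^{j} to 𝒫^{j+a}, i.e. h to h - a *)
Definition homog (a : int) (F : mat) : Prop :=
  forall h h' : nat, h'%:Z != h%:Z - a -> forall v, F h h' v = 0.

Definition mlinear (F : mat) : Prop :=
  forall h h' (c : Gc) (u v : C h), F h h' (c *: u + v) = c *: F h h' u + F h h' v.

Definition inE (a : int) (F : mat) : Prop := homog a F /\ mlinear F.

Definition m0 : mat := fun h h' v => 0.
Definition madd (F F' : mat) : mat := fun h h' v => F h h' v + F' h h' v.
Definition mscale (c : G) (F : mat) : mat := fun h h' v => (c : Gc) *: F h h' v.
Definition msub (F F' : mat) : mat := madd F (mscale (-1) F').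

(** composition F o G' where G' is homogeneous of degree b *)
Definition mcomp (b : int) (F G' : mat) : mat := fun h h'' v =>
  match h%:Z - b with
  | Posz h' => F h' h'' (G' h h' v)
  | Negz _ => 0
  end.

Definition idm : mat := fun h h' v => if h == h' then @tr (h %% n)%N (h' %% n)%N v else 0.

(** the differential of 𝒫: from the l-th copy of P_i to the l-th copy of
    P_{i-1} it is (-1)^{l n} d_i (i >= 1), and from the (l+1)-th copy of
    P_0 to the l-th copy of P_{n-1} it is (-1)^{l n} d_0, d_0 = beta o alpha *)
Definition dsign (h : nat) : nat :=
  ((if (h %% n == 0)%N then (h %/ n)%N.-1 else (h %/ n)%N) * n)%N.

Definition dP : mat := fun h h' v =>
  if h'.+1 == h then
    ((-1) ^+ dsign h : Gc) *:
    (match (h %% n)%N as r return P r -> P (h' %% n)%N with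
     | 0 => fun w => @tr n.-1 (h' %% n)%N (beta (alpha w))
     | i.+1 => fun w => @tr i (h' %% n)%N (d i w)
     end) v
  else 0.

Definition delta (a : int) (F : mat) : mat :=
  msub (mcomp a dP F) (mscale ((-1) ^+ `|a|%N) (mcomp 1 F dP)).

(** sigma: identity from the l-th copy of P_i to the (l-1)-th, zero on copy 0;
    degree n *)
Definition sigm : mat := fun h h' v =>
  if (h' + n == h)%N then @tr (h %% n)%N (h' %% n)%N v else 0.

Definition sigmaE (a : int) (x : mat) : Prop :=
  inE a x /\
  mcomp a sigm x = mscale ((-1) ^+ (n * `|a|)%N) (mcomp n x sigm).

End PeriodicComplex.

Arguments mat {k G} n P.
Arguments C {k G} n P h.
Arguments tr {k G P} i j v.
Arguments homog {k G} n P a F.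
Arguments mlinear {k G} n P F.
Arguments inE {k G} n P a F.
Arguments m0 {k G} n P h h' _.
Arguments idm {k G} n P h h' _.
Arguments sigm {k G} n P h h' _.
Arguments sigmaE {k G} n P a x.
Arguments madd {k G n P} F F' h h' _.
Arguments mscale {k G n P} c F h h' _.
Arguments msub {k G n P} F F' h h' _.
Arguments mcomp {k G n P} b F G' h h'' _ : rename.
Arguments dP {k G M n P} d alpha beta h h' _.
Arguments delta {k G M n P} d alpha beta a F h h' _.
Arguments exact_seq {k G M n P} d alpha beta.

(** sigma consists of identity maps, and the differential of 𝒫 repeats itself
    with the extra sign (-1)^n from one copy of P to the next; hence sigma
    graded-commutes with d_𝒫, i.e. d_𝒫 lies in ^sigma ℰ^1.  The defining
    condition of ^sigma ℰ is stable under sums, central scalars and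
    composition, the signs multiplying because
    (-1)^{n|a+b|} = (-1)^{n|a|} (-1)^{n|b|}.  So delta(x) = d_𝒫 x - (-1)^{|x|} x d_𝒫
    lies in ^sigma ℰ together with x, which gives (1) and the closure of
    ^sigma ℰ under delta. *)
From Pilot Require Import Defs.
From HB Require Import structures.
From mathcomp Require Import all_boot all_order all_algebra zify.
From Stdlib Require Import FunctionalExtensionality.
Import GRing.Theory.
Local Open Scope ring_scope.

Lemma odd_absD (a b : int) : odd `|(a + b)%R| = odd `|a| (+) odd `|b|.
Proof.
have absD_mod2 : (`|(a + b)%R| %% 2 = (`|a| + `|b|) %% 2)%N by lia.
by move: absD_mod2; rewrite !modn2 oddD; do 3 case: odd.
Qed.

Lemma signr_absD (R : pzRingType) (m : nat) (a b : int) :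
  (-1) ^+ (m * `|(a + b)%R|) = (-1) ^+ (m * `|b|) * (-1) ^+ (m * `|a|) :> R.
Proof.
rewrite -exprD -signr_odd -[RHS]signr_odd oddD !oddM odd_absD.
by case: (odd m); case: (odd `|a|); case: (odd `|b|).
Qed.

Section Endomorphisms.
Context {k : fieldType} {G : algType k} {n : nat} {P : nat -> lmodType G^c}.

Local Notation mat := (mat n P).
Local Notation sigm := (sigm n P).

Lemma mat_ext (F F' : mat) : (forall h h' v, F h h' v = F' h h' v) -> F = F'.
Proof.
move=> eqFF'; do 2 apply: functional_extensionality_dep => ?.
exact: functional_extensionality_dep.
Qed.

Lemma trxx i (v : P i) : tr i i v = v.
Proof. by rewrite /tr; case: eqP => // e; rewrite (eq_axiomK e). Qed.

Lemma tr_tr i j j' (v : P i) : j = j' -> tr j j' (tr i j v) = tr i j' v.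
Proof. by move=> <-; rewrite trxx. Qed.

Lemma tr_lin i j (c : G^c) (u v : P i) :
  tr i j (c *: u + v) = c *: tr i j u + tr i j v.
Proof. by rewrite /tr; case: eqP => [e|_]; [subst j | rewrite scaler0 addr0]. Qed.

Lemma trZ i j (c : G^c) (u : P i) : tr i j (c *: u) = c *: tr i j u.
Proof.
have tr0 : tr i j (0 : P i) = 0 by rewrite /tr; case: eqP => // e; subst.
by have := tr_lin i j c u 0; rewrite tr0 !addr0.
Qed.

Section Linear.
Variables (F : mat) (linF : mlinear n P F).

Lemma mlinear0 h h' : F h h' 0 = 0.
Proof.
have := linF h h' 1 0 0; rewrite !scale1r addr0.
by rewrite -{1}[F h h' 0]addr0 => /addrI <-.
Qed.

Lemma mlinearZ h h' c u : F h h' (c *: u) = c *: F h h' u.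
Proof. by have := linF h h' c u 0; rewrite mlinear0 !addr0. Qed.

Lemma mlinearD h h' u v : F h h' (u + v) = F h h' u + F h h' v.
Proof. by have := linF h h' 1 u v; rewrite !scale1r. Qed.

End Linear.

Lemma mlinear_sigm : mlinear n P sigm.
Proof.
move=> h h' c u v; rewrite /sigm.
by case: ifP => _; [exact: tr_lin | rewrite scaler0 addr0].
Qed.

Lemma mcompA (a b : int) (F G1 G2 : mat) : mlinear n P F ->
  mcomp b (mcomp a F G1) G2 = mcomp (a + b) F (mcomp b G1 G2).
Proof.
move=> linF; apply: mat_ext => h h'' v; rewrite /mcomp.
case E1: (h%:Z - b) => [p1|p1]; case E3: (h%:Z - (a + b)) => [q|q] //.
- case E2: (p1%:Z - a) => [p2|p2]; last lia.
  by have -> : p2 = q by lia.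
- by case E2: (p1%:Z - a) => [p2|p2] //; lia.
- by rewrite mlinear0.
Qed.

Lemma mcompZl b c (F G1 : mat) : mcomp b (mscale c F) G1 = mscale c (mcomp b F G1).
Proof.
apply: mat_ext => h h'' v; rewrite /mcomp /mscale.
by case: (_ - _) => // p; rewrite scaler0.
Qed.

Lemma mcompZr b c (F G1 : mat) : mlinear n P F ->
  mcomp b F (mscale c G1) = mscale c (mcomp b F G1).
Proof.
move=> linF; apply: mat_ext => h h'' v; rewrite /mcomp /mscale.
by case: (_ - _) => p; rewrite ?mlinearZ ?scaler0.
Qed.

Lemma mcompDl b (F F' G1 : mat) :
  mcomp b (madd F F') G1 = madd (mcomp b F G1) (mcomp b F' G1).
Proof.
apply: mat_ext => h h'' v; rewrite /mcomp /madd.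
by case: (_ - _) => // p; rewrite addr0.
Qed.

Lemma mcompDr b (F G1 G2 : mat) : mlinear n P F ->
  mcomp b F (madd G1 G2) = madd (mcomp b F G1) (mcomp b F G2).
Proof.
move=> linF; apply: mat_ext => h h'' v; rewrite /mcomp /madd.
by case: (_ - _) => p; rewrite ?mlinearD ?addr0.
Qed.

Lemma mscaleA c c' (F : mat) : mscale c (mscale c' F) = mscale (c' * c) F.
Proof. by apply: mat_ext => h h' v; rewrite /mscale scalerA. Qed.

Lemma mscaleDr c (F F' : mat) : mscale c (madd F F') = madd (mscale c F) (mscale c F').
Proof. by apply: mat_ext => h h' v; rewrite /mscale /madd scalerDr. Qed.

Lemma inE_madd a (F F' : mat) :
  Defs.inE n P a F -> Defs.inE n P a F' -> Defs.inE n P a (madd F F').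
Proof.
move=> [homF linF] [homF' linF']; split=> [h h' ne v | h h' c u v]; rewrite /madd.
  by rewrite homF // homF' // addr0.
by rewrite linF linF' scalerDr addrACA.
Qed.

Lemma inE_mscale a c (F : mat) : (forall y, GRing.comm c y) ->
  Defs.inE n P a F -> Defs.inE n P a (mscale c F).
Proof.
move=> cC [homF linF]; split=> [h h' ne v | h h' c' u v]; rewrite /mscale.
  by rewrite homF // scaler0.
rewrite linF scalerDr !scalerA; congr (_ *: _ + _); exact: esym (cC c').
Qed.

Lemma inE_mcomp a b (F G1 : mat) : Defs.inE n P a F -> Defs.inE n P b G1 ->
  Defs.inE n P (a + b) (mcomp b F G1).
Proof.
move=> [homF linF] [_ linG1]; split=> [h h'' ne v | h h'' c u v]; rewrite /mcomp.
  case E: (h%:Z - b) => [p|p] //; apply: homF.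
  by apply: contra ne => /eqP e; apply/eqP; lia.
by case: (_ - _) => p; rewrite ?linG1 ?linF ?scaler0 ?addr0.
Qed.

Lemma sigmaE_m0 a : sigmaE n P a (m0 n P).
Proof.
split.
  by split=> [h h' ne v | h h' c u v]; rewrite /m0 ?scaler0 ?addr0.
apply: mat_ext => h h'' v; rewrite /mcomp /mscale /m0.
by case: (h%:Z - a) => p; case: (h%:Z - n%:Z) => q;
  rewrite ?scaler0 ?(mlinear0 _ mlinear_sigm).
Qed.

Lemma sigmaE_madd a (x y : mat) :
  sigmaE n P a x -> sigmaE n P a y -> sigmaE n P a (madd x y).
Proof.
move=> [inx sx] [iny sy]; split; first exact: inE_madd.
by rewrite (mcompDr _ _ _ _ mlinear_sigm) sx sy mcompDl mscaleDr.
Qed.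

Lemma sigmaE_mscale a c (x : mat) : (forall y, GRing.comm c y) ->
  sigmaE n P a x -> sigmaE n P a (mscale c x).
Proof.
move=> cC [inx sx]; split; first exact: inE_mscale.
by rewrite (mcompZr _ _ _ _ mlinear_sigm) sx mcompZl !mscaleA cC.
Qed.

Lemma sigmaE_mcomp a b (x y : mat) :
  sigmaE n P a x -> sigmaE n P b y -> sigmaE n P (a + b) (mcomp b x y).
Proof.
move=> [inx sx] [iny sy]; split; first exact: inE_mcomp.
have [_ linx] := inx.
rewrite -(mcompA _ _ _ _ _ mlinear_sigm) sx mcompZl !mcompA // sy mcompZr //.
by rewrite mscaleA signr_absD (addrC n%:Z b).
Qed.

Lemma sigmaE_idm : sigmaE n P 0 (idm n P).
Proof.
split.
  split=> [h h' ne v | h h' c u v]; rewrite /idm; case: eqP => [e|_].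
  - by rewrite e subr0 eqxx in ne.
  - by [].
  - exact: tr_lin.
  - by rewrite scaler0 addr0.
apply: mat_ext => h h'' v; rewrite /mcomp /mscale subr0 muln0 expr0 scale1r.
rewrite /idm eqxx trxx /sigm.
case E: (h%:Z - n%:Z) => [q|q]; last by case: ifP => // /eqP; lia.
have eh : h = (q + n)%N by lia.
subst h; rewrite eqn_add2r eq_sym; case: eqP => [<-|_] //.
by rewrite eqxx tr_tr.
Qed.

End Endomorphisms.

Section Differential.
Context {k : fieldType} {G : algType k} {M : lmodType G^c} {n : nat}
  {P : nat -> lmodType G^c}.
Variables (d : forall i, {linear P i.+1 -> P i})
  (alpha : {linear P 0 -> M}) (beta : {linear M -> P n.-1}).
Hypothesis n_gt0 : (0 < n)%N.

(* The paper's d_i out of P_i (with d_0 = beta o alpha; note [d i] is the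
   paper's d_{i+1}), transported to P_j. *)
Definition dout (i j : nat) : P i -> P j :=
  match i as r return P r -> P j with
  | 0 => fun w => tr n.-1 j (beta (alpha w))
  | i.+1 => fun w => tr i j (d i w)
  end.

Lemma dPE h h' v : dP d alpha beta h h' v =
  if h'.+1 == h then ((-1) ^+ dsign n h : G^c) *: dout (h %% n) (h' %% n) v else 0.
Proof. by []. Qed.

Lemma dout_lin i j c u v : dout i j (c *: u + v) = c *: dout i j u + dout i j v.
Proof. by case: i u v => [|i] u v /=; rewrite !linearP tr_lin. Qed.

Lemma tr_dout i j j' (v : P i) : j = j' -> tr j j' (dout i j v) = dout i j' v.
Proof. by move=> <-; rewrite trxx. Qed.

Lemma dout_tr i i' j (v : P i') : i' = i -> dout i j (tr i' i v) = dout i' j v.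
Proof. by move=> e; subst; rewrite trxx. Qed.

Lemma dsign_addn h : (0 < h)%N -> dsign n (h + n) = (n + dsign n h)%N.
Proof.
move=> h_gt0; rewrite /dsign modnDr.
have -> : ((h + n) %/ n = (h %/ n).+1)%N.
  by rewrite -[X in (h + X)%N]mul1n divnDMl // addn1.
have := divn_eq h n; have := ltn_pmod h n_gt0.
case: ifP => /eqP mod_h; rewrite ?mod_h; try lia.
by case: (h %/ n)%N => [|m] _ /=; lia.
Qed.

Lemma sigmaE_dP : sigmaE n P 1 (dP d alpha beta).
Proof.
split.
  split=> [h h' ne v | h h' c u v]; rewrite !dPE; case: ifP => // /eqP e.
  - by exfalso; move/eqP: ne; apply; lia.
  - by rewrite dout_lin scalerDr !scalerA (commr_sign c).
  - by rewrite scaler0 addr0.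
apply: mat_ext => h h'' v; rewrite /mcomp /mscale /sigm.
case E1: (h%:Z - 1) => [p|p]; case E2: (h%:Z - n%:Z) => [q|q].
- rewrite !dPE.
  have -> : p.+1 == h by apply/eqP; lia.
  have -> : (q + n == h)%N by apply/eqP; lia.
  have -> : (h''.+1 == q) = (h'' + n == p)%N by apply/eqP/eqP; lia.
  case: ifP => /eqP ep; last by rewrite !scaler0.
  have eh : h = (h''.+1 + n)%N by lia.
  subst h p; have eq_q : q = h''.+1 by lia.
  subst q.
  rewrite trZ tr_dout ?modnDr // dout_tr ?modnDr // scalerA; congr (_ *: _).
  by rewrite dsign_addn // exprD /= muln1 revrX.
- by rewrite scaler0; case: ifP => [/eqP ep|//]; exfalso; lia.
- by exfalso; lia.
- by rewrite scaler0.
Qed.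

Lemma sigmaE_delta a (x : mat n P) :
  sigmaE n P a x -> sigmaE n P (a + 1) (delta d alpha beta a x).
Proof.
move=> sx; apply: sigmaE_madd.
  by rewrite addrC; apply: sigmaE_mcomp sx; exact: sigmaE_dP.
apply: sigmaE_mscale; first by move=> y; exact/commr_sym/commrN1.
apply: sigmaE_mscale; first by move=> y; exact/commr_sym/commr_sign.
by apply: sigmaE_mcomp sx _; exact: sigmaE_dP.
Qed.

End Differential.

Theorem lemma2p7 (k : fieldType) (G : algType k) (M : lmodType (G^c))
  (n : nat) (P : nat -> lmodType (G^c))
  (d : forall i, {linear P i.+1 -> P i})
  (alpha : {linear P 0 -> M}) (beta : {linear M -> P n.-1}) :
  (0 < n)%N ->
  (forall i, (i < n)%N -> fin_gen (P i) /\ projective (P i)) ->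
  exact_seq d alpha beta ->
  let sigma := sigm n P in
  let D := delta d alpha beta in
  (* (1) *)
  (forall (a : int) (x : mat n P), sigmaE n P a x ->
     mcomp (a + 1) sigma (D a x)
     = mscale ((-1) ^+ (n * `|(a + 1)%R|)%N) (mcomp n (D a x) sigma)) /\
  (* (2) ^sigma ℰ is a DG-subalgebra of ℰ *)
  ([/\ (forall a : int, sigmaE n P a (m0 n P)),
      (forall (a : int) (x y : mat n P), sigmaE n P a x -> sigmaE n P a y ->
          sigmaE n P a (madd x y)),
      (forall (a : int) (c : k) (x : mat n P), sigmaE n P a x ->
          sigmaE n P a (mscale (c%:A : G) x))
    & sigmaE n P 0 (idm n P)] /\
   [/\ 
      (forall (a b : int) (x y : mat n P), sigmaE n P a x -> sigmaE n P b y ->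
          sigmaE n P (a + b) (mcomp b x y))
    & (forall (a : int) (x : mat n P), sigmaE n P a x -> sigmaE n P (a + 1) (D a x))]).

Proof.
move=> n_gt0 _ _ sigma D.
split; first by move=> a x /(sigmaE_delta d alpha beta n_gt0) [].
split; split.
- exact: sigmaE_m0.
- exact: sigmaE_madd.
- by move=> a c x; apply: sigmaE_mscale; exact: comm_alg.
- exact: sigmaE_idm.
- exact: sigmaE_mcomp.
- exact: sigmaE_delta.
Qed.
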